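(* Let $G$ be a graph with a bramble $\mathcal{B}$ and let $\ell$ be a nonnegative integer. Let $S$ and $T$ be subsets of $V(G)$ such that $\mathcal{B}_S$ and $\mathcal{B}_T$ both have order at least $\ell$. Then there are $\ell$ pairwise vertex-disjoint paths in $G$ from $S$ to $T$.
   Context: All graphs are finite and simple. A bramble $\mathcal{B}$ in a graph $G$ is a family of connected subgraphs of $G$ such that every two of them share a vertex or are joined by an edge of $G$. A hitting set for $\mathcal{B}$ is a set of vertices intersecting every element of $\mathcal{B}$; the order of $\mathcal{B}$ is the minimum size of a hitting set. Any subset of a bramble is a bramble. For $X\subseteq V(G)$, $\mathcal{B}_X$ denotes the set of elements of $\mathcal{B}$ that intersect $X$. *)

From mathcomp Require Import all_boot.
Set Implicit Arguments. Unset Strict Implicit. Unset Printing Implicit Defensive.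

Section Graphs.
Variable V : finType.

Definition simple_graph (e : rel V) : Prop := symmetric e /\ irreflexive e.

Definition induced (e : rel V) (X : {set V}) : rel V :=
  [rel u v | [&& e u v, u \in X & v \in X]].

(* X induces a connected (nonempty) subgraph; a connected subgraph of G is
   identified with its vertex set, which then induces a connected subgraph. *)
Definition connected_set (e : rel V) (X : {set V}) : Prop :=
  X != set0 /\ {in X &, forall x y, connect (induced e X) x y}.

Definition touch (e : rel V) (X Y : {set V}) : Prop :=
  (exists2 x, x \in X & x \in Y) \/
  (exists x, exists y, [/\ x \in X, y \in Y & e x y]).

Definition bramble (e : rel V) (B : {set {set V}}) : Prop :=
  (forall X, X \in B -> connected_set e X) /\
  (forall X Y, X \in B -> Y \in B -> touch e X Y).

Definition hitting_set (B : {set {set V}}) (H : {set V}) : Prop :=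
  forall X, X \in B -> (X :&: H) != set0.

Definition order_at_least (B : {set {set V}}) (l : nat) : Prop :=
  forall H, hitting_set B H -> l <= #|H|.

Definition bramble_restr (B : {set {set V}}) (X : {set V}) : {set {set V}} :=
  [set Y in B | (Y :&: X) != set0].

Definition path_from_to (e : rel V) (S T : {set V}) (p : seq V) : Prop :=
  exists x, exists q, [/\ p = x :: q, path e x q, uniq p, x \in S & last x q \in T].

End Graphs.

(* If an S-T separator Z had fewer than l vertices, it would miss some X in B_S
   and some X' in B_T; as X and X' are connected and touch, G - Z would contain
   an S-T path through X and X'.  So every S-T separator has at least l
   vertices, and Menger's theorem yields l disjoint S-T paths.

   Menger's theorem is proved by induction on the number of edges (Goering's
   edge-deletion argument).  Delete an edge xy; if G - xy still has an S-T
   separator Y with fewer than k vertices, orient xy so that in G - xy - Y the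
   set S does not reach y and T does not reach x.  Then every S-(Y+x) separator
   and every T-(Y+y) separator of G - xy separates S from T in G, so induction
   gives k disjoint S-(Y+x) paths and k disjoint T-(Y+y) paths in G - xy.  These
   meet only in Y, at their ends, and glue through Y and the edge xy. *)

From mathcomp Require Import all_boot.
Set Implicit Arguments. Unset Strict Implicit. Unset Printing Implicit Defensive.

Section Menger.
Variable V : finType.
Implicit Types (e : rel V) (A S T W X Y Z : {set V}) (p q : seq V).

Definition reach e Z s t := (s \notin Z) && connect (induced e (~: Z)) s t.

Definition reach_from e Z A v := [exists a in A, reach e Z a v].

Definition separates e S T Z := [forall t in T, ~~ reach_from e Z S t].

Definition separators_ge e S T k := forall Z, separates e S T Z -> k <= #|Z|.

Definition st_path e S T p :=
  if p is s :: q then [&& path e s q, uniq (s :: q), s \in S & last s q \in T]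
  else false.

Definition first_hit T p := if p is s :: q then all [predC T] (belast s q) else true.

Definition pairwise_disjoint k (P : 'I_k -> seq V) :=
  forall i j, i != j -> forall v, v \in P i -> v \notin P j.

Definition has_linkage e S T k :=
  exists2 P : 'I_k -> seq V, forall i, st_path e S T (P i) & pairwise_disjoint P.

Lemma induced_sym e X : symmetric e -> symmetric (induced e X).
Proof. by move=> sym_e u v; rewrite /induced /= sym_e [(u \in X) && _]andbC. Qed.

Lemma reach0 e Z s : s \notin Z -> reach e Z s s.
Proof. by move=> sZ; rewrite /reach sZ connect0. Qed.

Lemma reach_notin e Z s t : reach e Z s t -> t \notin Z.
Proof.
case/andP=> + /connectP[p + ->]; elim: p s => //= u p IHp s _ /andP[/and3P[_ _]].
by rewrite in_setC => /IHp.
Qed.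

Lemma reach_trans e Z a b c : reach e Z a b -> reach e Z b c -> reach e Z a c.
Proof. by case/andP=> aZ ab /andP[_ bc]; rewrite /reach aZ (connect_trans ab bc). Qed.

Lemma reach_edge e Z a b : a \notin Z -> b \notin Z -> e a b -> reach e Z a b.
Proof.
by move=> aZ bZ eab; rewrite /reach aZ connect1 // /induced /= eab !in_setC aZ bZ.
Qed.

Lemma reach_sym e Z a b : symmetric e -> reach e Z a b -> reach e Z b a.
Proof.
move=> sym_e r; rewrite /reach (reach_notin r) (sym_connect_sym (induced_sym _ sym_e)).
by case/andP: r.
Qed.

Lemma reach_subset e Z Z' a b : Z' \subset Z -> reach e Z a b -> reach e Z' a b.
Proof.
move=> sZ /andP[aZ ab]; have nZ u : u \notin Z -> u \notin Z'.
  by apply: contra; apply: (subsetP sZ).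
rewrite /reach nZ //; apply: connect_sub ab => u v /and3P[euv uZ vZ].
by apply: connect1; rewrite /induced /= euv !in_setC !nZ -?in_setC.
Qed.

Lemma connect_ind (r : rel V) (P : pred V) a b :
  (forall u v, r u v -> P u -> P v) -> connect r a b -> P a -> P b.
Proof.
move=> rP /connectP[p + ->]; elim: p a => //= u p IHp a /andP[rau pu] Pa.
exact: IHp pu (rP _ _ rau Pa).
Qed.

Lemma path_reach e Z s q v :
  path e s q -> all [predC Z] (s :: q) -> v \in s :: q -> reach e Z s v.
Proof.
move=> pq avoidZ vq; apply/andP; split; first by case/andP: avoidZ.
apply: (path_connect _ vq); apply: sub_in_path avoidZ pq => u w uZ wZ euw.
by rewrite /induced /= euw !in_setC; apply/and3P.
Qed.

Lemma first_hit_reach e Z s q v : path e s q -> all [predC Z] (belast s q) ->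
  v \in s :: q -> v \notin Z -> reach e Z s v.
Proof.
case/lastP: q => [_ _|q w]; first by rewrite mem_seq1 => /eqP-> /reach0.
rewrite belast_rcons -rcons_cons mem_rcons in_cons => pqw avoidZ.
case/orP=> [/eqP-> wZ|vq _]; last first.
  by apply: path_reach vq => //; move: pqw; rewrite rcons_path => /andP[].
apply: path_reach pqw _ _; first by rewrite -rcons_cons all_rcons /= wZ.
by rewrite -rcons_cons mem_rcons mem_head.
Qed.

Lemma reach_fromP e Z A v :
  reflect (exists2 a, a \in A & reach e Z a v) (reach_from e Z A v).
Proof. exact: exists_inP. Qed.

Lemma separatesP e S T Z :
  reflect (forall s t, s \in S -> t \in T -> ~~ reach e Z s t) (separates e S T Z).
Proof.
apply: (iffP forall_inP) => [sepZ s t sS tT | sepZ t tT].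
  by apply: contra (sepZ t tT) => r; apply/reach_fromP; exists s.
by apply/reach_fromP => -[s sS]; apply/negP; apply: sepZ.
Qed.

Lemma separates_sym e S T Z : symmetric e -> separates e S T Z -> separates e T S Z.
Proof.
move=> sym_e /separatesP sepZ; apply/separatesP => t s tT sS.
by apply: contra (sepZ s t sS tT); apply: reach_sym.
Qed.

Lemma separates_target e S T : separates e S T T.
Proof. by apply/separatesP => s t _ tT; apply: contraL tT => /reach_notin. Qed.

Lemma separates_reach_from e S T Z v : symmetric e -> separates e S T Z ->
  ~~ (reach_from e Z S v && reach_from e Z T v).
Proof.
move=> sym_e /separatesP sepZ.
apply/andP => -[/reach_fromP[s sS rs] /reach_fromP[t tT rt]].
by case/negP: (sepZ s t sS tT); apply: reach_trans rs (reach_sym sym_e rt).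
Qed.

Lemma st_pathP e S T p : reflect (path_from_to e S T p) (st_path e S T p).
Proof.
case: p => [|s q]; first by constructor => -[x [q []]].
apply: (iffP and4P) => [[pq uq sS lT] | [x [q' [[<- <-] pq uq sS lT]]]] //.
by exists s, q.
Qed.

Lemma st_path_sub e e' S T p : subrel e e' -> st_path e S T p -> st_path e' S T p.
Proof.
by move=> ee'; case: p => // s q /and4P[pq *]; apply/and4P; split=> //; exact: (sub_path ee' pq).
Qed.

Lemma st_path_last x0 e S T p : st_path e S T p -> last x0 p \in T.
Proof. by case: p => // s q /and4P[]. Qed.

Lemma st_path_mem_last x0 e S T p : st_path e S T p -> last x0 p \in p.
Proof. by case: p => // s q _; apply: (mem_last s q). Qed.

Lemma first_hit_last x0 T p v : first_hit T p -> v \in p -> v \in T -> v = last x0 p.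
Proof.
case: p => // s q /=; rewrite lastI mem_rcons in_cons => /allP avoidT.
by case/orP=> [/eqP // | /avoidT /negP].
Qed.

Lemma first_hit_reach_from e S A Z p v : st_path e S A p -> first_hit A p ->
  Z \subset A -> v \in p -> v \notin Z -> reach_from e Z S v.
Proof.
case: p => // s q /and4P[pq _ sS _] /= avoidA ZA vp vZ.
apply/reach_fromP; exists s => //.
apply: first_hit_reach pq _ vp vZ; apply: sub_all avoidA => u /=.
by apply: contra; apply: (subsetP ZA).
Qed.

Lemma path_first_hit e T s q : path e s q -> last s q \in T ->
  exists2 q', [&& path e s q', last s q' \in T & all [predC T] (belast s q')]
            & subseq q' q.
Proof.
elim: q s => [|u q IHq] s /=; first by move=> _ sT; exists [::]; rewrite /= ?sT.
move=> /andP[esu pq] lT; have [sT|sT] := boolP (s \in T).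
  by exists [::]; rewrite /= ?sT.
have [q' /and3P[pq' lT' avoidT] sub] := IHq u pq lT.
by exists (u :: q'); rewrite /= ?esu ?pq' ?lT' ?sT ?avoidT ?eqxx.
Qed.

Lemma st_path_first_hit e S T p : st_path e S T p ->
  exists2 p', st_path e S T p' && first_hit T p' & {subset p' <= p}.
Proof.
case: p => // s q /and4P[pq uq sS lT].
have [q' /and3P[pq' lT' avoidT] sub] := path_first_hit pq lT.
have sub' : subseq (s :: q') (s :: q) by rewrite /= eqxx.
exists (s :: q'); last exact: mem_subseq sub'.
apply/andP; split; last exact: avoidT.
by apply/and4P; split=> //; apply: subseq_uniq sub' uq.
Qed.

Lemma linkage_first_hit e S T k : has_linkage e S T k ->
  exists2 P : 'I_k -> seq V,
    forall i, st_path e S T (P i) && first_hit T (P i) & pairwise_disjoint P.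
Proof.
case=> P HP dP.
have [P' HP' subP'] := fin_all_exists2 (fun i => st_path_first_hit (HP i)).
exists P' => // i j ij v /subP' vi; exact: contra (@subP' j v) (dP i j ij v vi).
Qed.

Lemma has_linkage_sub e e' S T k :
  subrel e e' -> has_linkage e S T k -> has_linkage e' S T k.
Proof. by move=> ee' [P HP dP]; exists P => // i; apply: st_path_sub (HP i). Qed.

Lemma has_linkage_leq e S T k m : k <= m -> has_linkage e S T m -> has_linkage e S T k.
Proof.
move=> km [P HP dP]; exists (fun i => P (widen_ord km i)) => // i j ij; apply: dP.
by apply: contra ij => /eqP/(congr1 val)/= ij; apply/eqP/val_inj.
Qed.

Lemma has_linkage_setI e S T : has_linkage e S T #|S :&: T|.
Proof.
exists (fun i => [:: enum_val i]) => [i | i j ij v].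
  by have := enum_valP i; rewrite inE /= => /andP[-> ->].
by rewrite !mem_seq1 => /eqP->; apply: contra ij => /eqP/enum_val_inj->.
Qed.

Lemma separates_setI_no_edge e S T :
  (forall u v, ~~ e u v) -> separates e S T (S :&: T).
Proof.
move=> no_edge; apply/separatesP => s t sS tT; apply/negP => /andP[sST].
case/connectP=> -[/= _ ts | u p /andP[/and3P[esu _ _] _] _].
  by rewrite inE sS -ts tT in sST.
by rewrite (negbTE (no_edge s u)) in esu.
Qed.

Lemma linkage_no_edge e S T k : (forall u v, ~~ e u v) -> separators_ge e S T k ->
  has_linkage e S T k.
Proof.
move=> no_edge sepk; apply: has_linkage_leq (has_linkage_setI e S T).
exact/sepk/separates_setI_no_edge.
Qed.

Lemma separates_del_edge e e' S T Y Z x y :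
  (forall u v, e u v -> ~~ e' u v -> u \in [set x; y]) ->
  separates e' S T Y -> ~~ reach_from e' Y S y ->
  separates e' S (x |: Y) Z -> separates e S T Z.
Proof.
move=> del /separatesP sepY Sy /separatesP sepZ; apply/separatesP => s t sS tT.
apply/negP => /andP[sZ /connect_ind walk].
pose W := Z :|: (x |: Y).
have YW : Y \subset W by apply/subsetP => u uY; rewrite !inE uY !orbT.
have sW : s \notin W.
  rewrite in_setU negb_or sZ /=; apply/negP => sxY.
  by case/negP: (sepZ s s sS sxY); apply: reach0.
suff /(reach_subset YW) : reach e' W s t by apply/negP; apply: sepY.
(* Along the walk, reachability from s in G - xy - W is preserved: the walk
   cannot enter x |: Y, which Z separates from S, and it cannot cross xy,
   since it would have to come from y, which S does not reach. *)
apply: (walk (reach e' W s)) (reach0 _ sW) => a b /and3P[eab _].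
rewrite in_setC => bZ ra; have aW := reach_notin ra.
have [e'ab | ne'ab] := boolP (e' a b).
  have [bxY | bxY] := boolP (b \in x |: Y).
    case/negP: (sepZ s b sS bxY); apply: reach_trans (reach_edge _ bZ e'ab).
      exact: reach_subset (subsetUl _ _) ra.
    by move: aW; rewrite in_setU negb_or => /andP[].
  by apply: reach_trans ra (reach_edge aW _ e'ab); rewrite in_setU negb_or bZ.
move: (del a b eab ne'ab); rewrite !inE => /orP[/eqP ax | /eqP ay].
  by rewrite ax !inE eqxx orbT in aW.
by case/negP: Sy; apply/reach_fromP; exists s => //; rewrite -ay; apply: reach_subset ra.
Qed.

Lemma separates_del_edge_reach e e' S T Y x y : symmetric e -> symmetric e' ->
  (forall u v, e u v -> ~~ e' u v -> u \in [set x; y]) ->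
  reach_from e' Y S x -> reach_from e' Y S y -> separates e' S T Y -> separates e S T Y.
Proof.
move=> sym_e sym_e' del Sx Sy /separatesP sepY; apply/separatesP => s t sS tT.
apply/negP => /andP[sY /connect_ind walk].
have /reach_fromP[s' s'S rt] : reach_from e' Y S t.
  apply: (walk (reach_from e' Y S)); last by apply/reach_fromP; exists s => //; apply: reach0.
  move=> u v /and3P[euv _]; rewrite in_setC => vY /reach_fromP[s' s'S ru].
  have [e'uv | ne'uv] := boolP (e' u v).
    apply/reach_fromP; exists s' => //.
    exact: reach_trans ru (reach_edge (reach_notin ru) vY e'uv).
  have : v \in [set x; y] by apply: (del v u); rewrite 1?sym_e 1?sym_e'.
  by rewrite !inE => /orP[] /eqP->.
by case/negP: (sepY s' t s'S tT).
Qed.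

Lemma del_edge_orientation e e' S T Y x y : symmetric e -> symmetric e' ->
  (forall u v, e u v -> ~~ e' u v -> u \in [set x; y]) ->
  separates e' S T Y -> ~~ separates e S T Y ->
  (~~ reach_from e' Y S y && ~~ reach_from e' Y T x) ||
  (~~ reach_from e' Y S x && ~~ reach_from e' Y T y).
Proof.
move=> sym_e sym_e' del sepY nsep.
have notS : ~~ (reach_from e' Y S x && reach_from e' Y S y).
  apply: contra nsep => /andP[Sx Sy].
  exact: separates_del_edge_reach sym_e sym_e' del Sx Sy sepY.
have notT : ~~ (reach_from e' Y T x && reach_from e' Y T y).
  apply: contra nsep => /andP[Tx Ty]; apply: (separates_sym sym_e).
  exact: separates_del_edge_reach sym_e sym_e' del Tx Ty (separates_sym sym_e' sepY).
move: notS notT (separates_reach_from x sym_e' sepY) (separates_reach_from y sym_e' sepY).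
by case: (reach_from e' Y S x); case: (reach_from e' Y S y);
   case: (reach_from e' Y T x); case: (reach_from e' Y T y).
Qed.

Definition join_path p q := p ++ behead (rev q).

Lemma behead_rev t q : behead (rev (t :: q)) = rev (belast t q).
Proof. by rewrite lastI rev_rcons. Qed.

Lemma last_rev_belast t q : last (last t q) (rev (belast t q)) = t.
Proof. by case: q => [|u q] //=; rewrite rev_cons last_rcons. Qed.

Lemma mem_join_path x0 p q v : uniq q -> v \in join_path p q ->
  (v \in p) || (v \in q) && (v != last x0 q).
Proof.
case: q => [|t q]; first by rewrite /join_path cats0 => _ ->.
rewrite /join_path behead_rev mem_cat mem_rev lastI rcons_uniq mem_rcons in_cons last_rcons.
case/andP=> notin_last _ /orP[-> // | vq].
by rewrite vq (memPn notin_last _ vq) !orbT.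
Qed.

Lemma st_path_join x0 e S T W p q : symmetric e ->
  st_path e S W p -> st_path e T W q -> last x0 p = last x0 q ->
  (forall v, v \in p -> v \in q -> v = last x0 q) -> st_path e S T (join_path p q).
Proof.
move=> sym_e; case: p => // s p; case: q => // t q.
move=> /and4P[ps us sS _] /and4P[qt ut tT _] /= lpq common; rewrite /join_path behead_rev.
move: (ut); rewrite lastI rcons_uniq => /andP[notin_last ubq].
apply/and4P; split => //.
- by rewrite cat_path ps lpq rev_path /=; apply: sub_path qt => u v; rewrite sym_e.
- change (uniq ((s :: p) ++ rev (belast t q))).
  rewrite cat_uniq us rev_uniq ubq andbT /=; apply/hasPn => v.
  rewrite mem_rev => vq; apply/negP => /common/(_ (mem_belast vq)) vl.
  by rewrite vl /= in vq; rewrite vq in notin_last.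
- by rewrite last_cat lpq last_rev_belast.
Qed.

Lemma linkage_last_inj x0 e S T k (P : 'I_k -> seq V) :
  (forall i, st_path e S T (P i)) -> pairwise_disjoint P ->
  injective (fun i => last x0 (P i)).
Proof.
move=> HP dP i j /= lij; apply: contraTeq (st_path_mem_last x0 (HP i)) => ij.
by rewrite lij; apply: dP (st_path_mem_last x0 (HP j)); rewrite eq_sym.
Qed.

Lemma join_linkages x0 e S T W k (P Q : 'I_k -> seq V) :
  symmetric e -> #|W| <= k ->
  (forall i, st_path e S W (P i)) -> pairwise_disjoint P ->
  (forall j, st_path e T W (Q j)) -> pairwise_disjoint Q ->
  (forall i j v, v \in P i -> v \in Q j -> v = last x0 (Q j)) ->
  has_linkage e S T k.
Proof.
move=> sym_e Wk HP dP HQ dQ common.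
(* By counting, the ends of Q cover W; pair each P i with the Q-path ending
   where it ends. *)
have endsQ : (fun j => last x0 (Q j)) @: setT = W.
  apply/eqP; rewrite eqEcard card_imset ?cardsT ?card_ord ?Wk ?andbT.
    by apply/subsetP => _ /imsetP[j _ ->]; apply: st_path_last (HQ j).
  exact: linkage_last_inj HQ dQ.
have /fin_all_exists[m Em] i : exists j, last x0 (Q j) = last x0 (P i).
  by have /imsetP[j _ ->] : last x0 (P i) \in (fun j => last x0 (Q j)) @: setT;
    [rewrite endsQ; apply: st_path_last (HP i) | exists j].
exists (fun i => join_path (P i) (Q (m i))) => [i | a b ab v].
  exact: st_path_join (HP i) (HQ (m i)) (esym (Em i)) (common i (m i)).
have uQ i : uniq (Q i) by case: (Q i) (HQ i) => // t q /and4P[].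
move=> /(mem_join_path x0 (uQ _))/orP[va | /andP[va nla]]; apply/negP;
  move=> /(mem_join_path x0 (uQ _))/orP[vb | /andP[vb nlb]].
- by rewrite (negbTE (@dP a b ab v va)) in vb.
- by case/eqP: nlb; apply: common va vb.
- by case/eqP: nla; apply: common vb va.
have mab : m a != m b.
  apply: contra ab => /eqP mab; apply/eqP; apply: (linkage_last_inj (x0 := x0) HP dP).
  by rewrite /= -!Em mab.
by case/negP: (dQ _ _ mab v va).
Qed.

Section GlueAlongEdge.
Variables (e e' : rel V) (S T Y : {set V}) (x y : V) (k : nat) (P Q : 'I_k -> seq V).
Hypotheses (sym_e : symmetric e) (sym_e' : symmetric e') (sub_e' : subrel e' e).
Hypotheses (exy : e x y) (sepY : separates e' S T Y) (Sy : ~~ reach_from e' Y S y).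
Hypotheses (yY : y \notin Y) (ltYk : #|Y| < k).
Hypotheses (HP : forall i, st_path e' S (x |: Y) (P i) && first_hit (x |: Y) (P i))
           (dP : pairwise_disjoint P).
Hypotheses (HQ : forall j, st_path e' T (y |: Y) (Q j) && first_hit (y |: Y) (Q j))
           (dQ : pairwise_disjoint Q).

Lemma linkages_meet_in_Y i j v : v \in P i -> v \in Q j -> v \in Y.
Proof.
move=> vP vQ; apply: contraT => vY.
case/andP: (HP i) => stP fhP; case/andP: (HQ j) => stQ fhQ.
have := separates_reach_from v sym_e' sepY.
by rewrite (first_hit_reach_from stP fhP (subsetUr _ _) vP vY)
           (first_hit_reach_from stQ fhQ (subsetUr _ _) vQ vY).
Qed.

Lemma y_notin_P i : y \notin P i.
Proof.
case/andP: (HP i) => stP fhP; apply: contra Sy => yP.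
exact: first_hit_reach_from stP fhP (subsetUr _ _) yP yY.
Qed.

Definition extend p := if last x p == x then rcons p y else p.

Lemma mem_extend p v : v \in extend p -> (v \in p) || (v == y) && (last x p == x).
Proof.
rewrite /extend; case: ifP => [_ | _ ->] //.
by rewrite mem_rcons in_cons andbT orbC.
Qed.

Lemma st_path_extend i : st_path e S (y |: Y) (extend (P i)).
Proof.
have := y_notin_P i; case/andP: (HP i); rewrite /extend.
case: (P i) => // s q /and4P[pq uq sS lxY] _ /= ys.
case: ifP => [/eqP lx | /negbT lx]; apply/and4P; split => //.
- by rewrite rcons_path lx exy andbT (sub_path sub_e' pq).
- by rewrite -rcons_cons rcons_uniq ys.
- by rewrite last_rcons setU11.
- exact: (sub_path sub_e' pq).
- by move: lxY; rewrite !inE (negbTE lx) /= => ->; rewrite orbT.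
Qed.

Lemma extend_disjoint : pairwise_disjoint (fun i => extend (P i)).
Proof.
move=> a b ab v /mem_extend/orP[va | /andP[/eqP-> la]];
  apply/negP => /mem_extend/orP[vb | /andP[/eqP vy lb]].
- by rewrite (negbTE (@dP a b ab v va)) in vb.
- by move: (y_notin_P a); rewrite -vy va.
- by move: (y_notin_P b); rewrite vb.
have end_x i : last x (P i) == x -> x \in P i.
  by case/andP: (HP i) => /(st_path_mem_last x) + _ /eqP lx; rewrite lx.
by move: (end_x b lb); rewrite (negbTE (@dP a b ab x (end_x a la))).
Qed.

Lemma extend_meet i j v : v \in extend (P i) -> v \in Q j -> v = last x (Q j).
Proof.
have /andP[_ fhQ] := HQ j.
move=> /mem_extend/orP[vP | /andP[/eqP-> _]] vQ; apply: (first_hit_last x fhQ vQ).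
  by rewrite in_setU1 (linkages_meet_in_Y vP vQ) orbT.
by rewrite setU11.
Qed.

Lemma glue_linkages : has_linkage e S T k.
Proof.
apply: (@join_linkages x _ _ _ (y |: Y) _ (fun i => extend (P i)) Q sym_e).
- by rewrite cardsU1 yY.
- exact: st_path_extend.
- exact: extend_disjoint.
- by move=> j; case/andP: (HQ j) => /(st_path_sub sub_e').
- exact: dQ.
- exact: extend_meet.
Qed.

End GlueAlongEdge.

Lemma menger_step e e' S T Y x y k : symmetric e -> symmetric e' -> subrel e' e ->
  (forall u v, e u v -> ~~ e' u v -> u \in [set x; y]) -> e x y ->
  (forall A B, separators_ge e' A B k -> has_linkage e' A B k) ->
  separators_ge e S T k -> separates e' S T Y -> #|Y| < k ->
  ~~ reach_from e' Y S y -> ~~ reach_from e' Y T x -> has_linkage e S T k.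
Proof.
move=> sym_e sym_e' sub_e' del exy IH sepk sepY ltYk Sy Tx.
have del' u v : e u v -> ~~ e' u v -> u \in [set y; x] by rewrite setUC; apply: del.
have sepS Z : separates e' S (x |: Y) Z -> separates e S T Z.
  exact: separates_del_edge del sepY Sy.
have sepT Z : separates e' T (y |: Y) Z -> separates e S T Z.
  by move/(separates_del_edge del' (separates_sym sym_e' sepY) Tx); apply: separates_sym.
have yY : y \notin Y.
  (* y |: Y is an S-T separator of G *)
  apply: contraTN ltYk => yY; rewrite -leqNgt.
  by have := sepk _ (sepT _ (separates_target e' T (y |: Y))); rewrite cardsU1 yY.
have [P HP dP] := linkage_first_hit (IH S (x |: Y) (fun Z => sepk Z \o sepS Z)).
have [Q HQ dQ] := linkage_first_hit (IH T (y |: Y) (fun Z => sepk Z \o sepT Z)).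
exact: glue_linkages sym_e sym_e' sub_e' exy sepY Sy yY ltYk HP dP HQ dQ.
Qed.

Theorem menger e S T k : symmetric e -> separators_ge e S T k -> has_linkage e S T k.
Proof.
move=> sym_e; have [n] := ubnP #|[set p : V * V | e p.1 p.2]|.
elim: n => // n IHn in e S T k sym_e *; rewrite ltnS => edges_e sepk.
have [[x y] /= exy | no_edge] := pickP [pred p : V * V | e p.1 p.2]; last first.
  by apply: linkage_no_edge sepk => u v; move: (no_edge (u, v)) => /= ->.
pose e' := [rel u v | e u v && ([set u; v] != [set x; y])].
have sym_e' : symmetric e' by move=> u v /=; rewrite sym_e setUC.
have sub_e' : subrel e' e by move=> u v /andP[].
have del u v : e u v -> ~~ e' u v -> u \in [set x; y].
  by move=> /= ->; rewrite negbK => /eqP <-; rewrite set21.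
have IH A B : separators_ge e' A B k -> has_linkage e' A B k.
  apply: IHn sym_e' _; apply: leq_trans edges_e; apply/proper_card/properP; split.
    by apply/subsetP => p; rewrite !inE; apply: sub_e'.
  by exists (x, y); rewrite !inE /= ?exy ?eqxx.
have [Y /andP[sepY ltYk] | large] := pickP (fun Y => separates e' S T Y && (#|Y| < k)).
  have nsep : ~~ separates e S T Y by apply: contraTN ltYk => /sepk; rewrite -leqNgt.
  have del' u v : e u v -> ~~ e' u v -> u \in [set y; x] by rewrite setUC; apply: del.
  have eyx : e y x by rewrite sym_e.
  case/orP: (del_edge_orientation sym_e sym_e' del sepY nsep) => /andP[Sy Tx].
    exact: menger_step sym_e sym_e' sub_e' del exy IH sepk sepY ltYk Sy Tx.
  exact: menger_step sym_e sym_e' sub_e' del' eyx IH sepk sepY ltYk Sy Tx.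
apply: has_linkage_sub sub_e' (IH S T _) => Z sepZ.
by move: (large Z); rewrite sepZ /= ltnNge => /negbFE.
Qed.

Lemma order_at_least_avoid B l Z : order_at_least B l -> #|Z| < l ->
  exists2 X, X \in B & X :&: Z == set0.
Proof.
move=> ordB ltZ; apply/exists_inP; apply: contraTT ltZ => /exists_inPn hit.
by rewrite -leqNgt; apply: ordB => X /hit.
Qed.

Lemma connected_set_reach e X Z a b : connected_set e X -> X :&: Z == set0 ->
  a \in X -> b \in X -> reach e Z a b.
Proof.
move=> [_ connX]; rewrite setI_eq0 => XZ aX bX.
have nZ u : u \in X -> u \notin Z by move=> uX; rewrite (disjointFr XZ uX).
rewrite /reach nZ //; apply: connect_sub (connX a b aX bX) => u v /and3P[euv uX vX].
by apply: connect1; rewrite /induced /= euv !in_setC !nZ.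
Qed.

Lemma touch_reach e X1 X2 Z a b :
  connected_set e X1 -> connected_set e X2 -> touch e X1 X2 ->
  X1 :&: Z == set0 -> X2 :&: Z == set0 -> a \in X1 -> b \in X2 -> reach e Z a b.
Proof.
move=> c1 c2 [[v v1 v2] | [u [w [u1 w2 euw]]]] Z1 Z2 a1 b2.
  exact: reach_trans (connected_set_reach c1 Z1 a1 v1) (connected_set_reach c2 Z2 v2 b2).
have ru := connected_set_reach c1 Z1 a1 u1; have rw := connected_set_reach c2 Z2 w2 b2.
apply: reach_trans ru (reach_trans (reach_edge (reach_notin ru) _ euw) rw).
by case/andP: rw.
Qed.

Lemma bramble_separators_ge e B S T l : bramble e B ->
  order_at_least (bramble_restr B S) l -> order_at_least (bramble_restr B T) l ->
  separators_ge e S T l.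
Proof.
move=> [connB touchB] ordS ordT Z /separatesP sepZ; rewrite leqNgt; apply/negP => ltZ.
have [X1] := order_at_least_avoid ordS ltZ; rewrite inE => /andP[X1B /set0Pn[s]].
rewrite inE => /andP[sX1 sS] X1Z.
have [X2] := order_at_least_avoid ordT ltZ; rewrite inE => /andP[X2B /set0Pn[t]].
rewrite inE => /andP[tX2 tT] X2Z.
case/negP: (sepZ s t sS tT).
exact: touch_reach (connB _ X1B) (connB _ X2B) (touchB _ _ X1B X2B) X1Z X2Z sX1 tX2.
Qed.

End Menger.

Theorem lemma2p4 (V : finType) (e : rel V) (B : {set {set V}}) (l : nat)
    (S T : {set V}) :
  simple_graph e -> bramble e B ->
  order_at_least (bramble_restr B S) l ->
  order_at_least (bramble_restr B T) l ->
  exists P : 'I_l -> seq V,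
    (forall i, path_from_to e S T (P i)) /\
    (forall i j, i != j -> forall v, v \in P i -> v \notin P j).
Proof.
move=> [sym_e _] bramble_B ordS ordT.
have [P HP dP] := menger sym_e (bramble_separators_ge bramble_B ordS ordT).
by exists P; split => // i; apply/st_pathP.
Qed.
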